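(* The rolling sieve finds all primes up to a bound $n$ using $O(n\log\log n)$ arithmetic operations and $O(\sqrt{n}\log n)$ bits of space.
   Context: Model of computation: a RAM where, for input $n$, arithmetic operations on integers of $O(\log n)$ bits and other basic operations have unit cost, words have $O(\log n)$ bits, space is measured in bits, and the output list of primes is not counted against the space. The rolling sieve is the following algorithm. Its data structure is a circular array $T[0..\Delta-1]$ of stacks, each implemented as a linked list. Initialization with a starting value $\mathrm{start}$: set $r=\lfloor\sqrt{\mathrm{start}}\rfloor+1$, $s=r^2$, $\Delta=r+2$, all stacks empty; for each prime $p\le r-1$ push $p$ onto stack $T[(p-(\mathrm{start}\bmod p))\bmod p]$; set $\mathrm{pos}=0$, $m=\mathrm{start}$. The procedure next() does: set isPrime = true; while $T[\mathrm{pos}]$ is nonempty, pop $p$ from it, push $p$ onto $T[(\mathrm{pos}+p)\bmod\Delta]$, and set isPrime = false; then if $m=s$: if isPrime is true, push $r$ onto $T[(\mathrm{pos}+r)\bmod\Delta]$ and set isPrime = false; in any case set $r=r+1$, $s=r^2$; then set $m=m+1$, $\mathrm{pos}=(\mathrm{pos}+1)\bmod\Delta$, and if $\mathrm{pos}=0$ increase $\Delta$ by $2$ (appending two new empty stacks at the end of the array); return isPrime (which reports whether the old value of $m$ is prime). To find all primes up to $n$: output the primes up to $100$ directly, initialize with $\mathrm{start}=100$, and repeatedly call next(), outputting the current integer whenever next() returns true, until $n$ has been processed. *)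

From Stdlib Require Import PeanoNat.
From mathcomp Require Import all_boot.
Set Implicit Arguments. Unset Strict Implicit. Unset Printing Implicit Defensive.

(* Stacks are lists (head = top); T is the circular array of stacks.   *)

Record rs_state := RS {
  rs_T : seq (seq nat);
  rs_delta : nat;
  rs_pos : nat;
  rs_m : nat;
  rs_r : nat;
  rs_s : nat }.

Definition push (p i : nat) (T : seq (seq nat)) : seq (seq nat) :=
  set_nth [::] T i (p :: nth [::] T i).

Definition pop_stack (i : nat) (T : seq (seq nat)) : seq (seq nat) :=
  set_nth [::] T i (behead (nth [::] T i)).

Definition cost_iter := 5.   (* test nonempty, pop, add+mod, push, set flag *)
Definition cost_next := 12.  (* all other operations of one next() call *)

(* The while loop of next(): L is the current content of T[pos].
   If that index equals pos, the loop would pop the same p forever: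
   this non-termination is represented by None.  Otherwise the stack
   T[pos] is untouched by the push, so the loop proceeds with the rest
   of L. *)
Fixpoint sieve_loop (pos delta : nat) (L : seq nat) (T : seq (seq nat))
    : option (seq (seq nat) * nat) :=
  match L with
  | [::] => Some (T, 1)     (* final emptiness test *)
  | p :: L' =>
      let j := (pos + p) %% delta in
      if j == pos then None
      else match sieve_loop pos delta L' (push p j (pop_stack pos T)) with
           | Some (T', c) => Some (T', c + cost_iter)
           | None => None
           end
  end.

Definition next (st : rs_state) : option (bool * rs_state * nat) :=
  let pos := rs_pos st in
  let delta := rs_delta st in
  let L := nth [::] (rs_T st) pos in
  match sieve_loop pos delta L (rs_T st) with
  | None => None
  | Some (T1, c1) =>
      let isP1 := nilp L in
      let '(T2, isP2, r2, s2, c2) :=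
        if rs_m st == rs_s st then
          let T2 := if isP1 then push (rs_r st) ((pos + rs_r st) %% delta) T1
                    else T1 in
          (T2, false, (rs_r st).+1, ((rs_r st).+1) ^ 2, 6)
        else (T1, isP1, rs_r st, rs_s st, 1) in
      let pos' := (pos + 1) %% delta in
      let '(T3, delta3, c3) :=
        if pos' == 0 then (T2 ++ [:: [::]; [::]], delta + 2, 3)
        else (T2, delta, 1) in
      Some (isP2, RS T3 delta3 pos' (rs_m st).+1 r2 s2, c1 + c2 + c3 + cost_next)
  end.

Definition rs_init (start : nat) : rs_state :=
  let r := Nat.sqrt start + 1 in
  let delta := r + 2 in
  let T := foldl (fun T p => push p ((p - start %% p) %% p) T)
                 (nseq delta [::])
                 [seq p <- iota 0 r | prime p] in
  RS T delta 0 start r (r ^ 2).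

(* Operations spent by the initialization with start = 100 and by
   outputting the primes up to 100 directly (a constant). *)
Definition init_cost : nat :=
  let st := rs_init 100 in
  100 * 10 + rs_delta st + 10 * size [seq p <- iota 0 (rs_r st) | prime p] + 20.

(* Words have O(log n) bits: we take
   word_bits n = floor(log2 n) + 2 (enough for m, s, r, Delta, pos, p).
   The data structure uses Delta head pointers, two words (value and
   link) per stack entry, and a constant number of words for the
   scalar variables (pos, m, r, s, Delta, isPrime, loop temporaries). *)
Definition word_bits (n : nat) : nat := trunc_log 2 n + 2.

Definition rs_space (n : nat) (st : rs_state) : nat :=
  word_bits n * (rs_delta st + 2 * sumn (map size (rs_T st)) + 10).

Fixpoint rs_iter (n k : nat) (st : rs_state) (out : seq nat) (ops sp : nat)
    : option (seq nat * nat * nat) :=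
  match k with
  | 0 => Some (out, ops, sp)
  | k'.+1 =>
      match next st with
      | None => None
      | Some (b, st', c) =>
          rs_iter n k' st' (if b then rcons out (rs_m st) else out)
                  (ops + c) (maxn sp (rs_space n st'))
      end
  end.

(* Find all primes up to n: output the primes up to 100 directly,
   initialize with start = 100 and call next() for m = 100, ..., n.
   Result: (output list, number of operations, peak space in bits). *)
Definition rolling_sieve (n : nat) : option (seq nat * nat * nat) :=
  let direct := [seq p <- iota 0 (minn n 100).+1 | prime p] in
  if n < 100 then Some (direct, 100 * 10, word_bits n * 10)
  else let st := rs_init 100 in
       rs_iter n (n - 99) st direct init_cost (rs_space n st).

From Pilot Require Import Defs.
From Stdlib Require Import Reals Lra PeanoNat.
From mathcomp Require Import all_boot zify.
Set Implicit Arguments. Unset Strict Implicit. Unset Printing Implicit Defensive.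

(* Every prime p < r sits in exactly one stack: the one that [pos] reaches
   when [m] next hits a multiple of p.  So next() at m pops exactly the primes
   below r dividing m, which decides primality because (r-1)^2 <= m <= r^2,
   and it costs O(1 + #{p < r | p divides m}).  Summed over m <= n this is
   O(n + sum_{p <= sqrt n} n/p).  The primes of a dyadic block (2^k, 2^(k+1)]
   all divide C(2^(k+1), 2^k) <= 4^(2^k), so there are O(2^k / k) of them and
   the block contributes O(n / k); summing over k <= log sqrt n gives
   O(n log log n).  The table has Delta = O(sqrt n) stacks holding fewer than
   r = O(sqrt n) entries, each of O(log n) bits. *)

(** * Sums of [n / p] over primes *)

Lemma prime_ndvd_fact p y : prime p -> y < p -> ~~ (p %| y`!).
Proof.
move=> pp; elim: y => [|y IH] lt_yp; first by rewrite fact0 Euclid_dvd1.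
rewrite factS Euclid_dvdM // negb_or IH ?andbT; last by lia.
by apply/negP => /dvdn_leq; lia.
Qed.

Lemma prime_dvd_bin_mid p y : prime p -> y < p <= 2 * y -> p %| 'C(2 * y, y).
Proof.
move=> pp /andP [lt_yp le_p2y].
have : p %| (2 * y)`! by apply: dvdn_fact; rewrite prime_gt0.
rewrite -(bin_fact (leq_pmull _ (isT : 0 < 2))) (_ : 2 * y - y = y); last by lia.
by rewrite !Euclid_dvdM // (negbTE (prime_ndvd_fact pp lt_yp)) !orbF.
Qed.

Lemma coprime_prod_primes p (s : seq nat) :
  prime p -> all prime s -> p \notin s -> coprime p (\prod_(q <- s) q).
Proof.
move=> pp; elim: s => [|q s IH] /=; first by rewrite big_nil coprimen1.
move=> /andP [pq aps]; rewrite in_cons negb_or => /andP [npq nps].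
by rewrite big_cons coprimeMr IH // andbT prime_coprime // dvdn_prime2.
Qed.

Lemma prod_primes_dvd (s : seq nat) N : uniq s -> all prime s ->
  {in s, forall p, p %| N} -> \prod_(p <- s) p %| N.
Proof.
elim: s => [|p s IH] /=; first by rewrite big_nil dvd1n.
move=> /andP [nps us] /andP [pp aps] dvdN.
rewrite big_cons Gauss_dvd; last exact: coprime_prod_primes.
by rewrite dvdN ?mem_head // IH // => q qs; apply: dvdN; rewrite in_cons qs orbT.
Qed.

Lemma expn_size_leq_prod y (s : seq nat) : {in s, forall p, y <= p} ->
  y ^ size s <= \prod_(p <- s) p.
Proof.
elim: s => [|p s IH] /= lb; first by rewrite big_nil.
rewrite big_cons expnS leq_mul ?lb ?mem_head // IH // => q qs.
by apply: lb; rewrite in_cons qs orbT.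
Qed.

Lemma bin_leq_exp2 n m : 'C(n, m) <= 2 ^ n.
Proof.
elim: n m => [|n IH] [|m] //=; first by rewrite bin0 expn_gt0.
by rewrite binS expnS mul2n -addnn leq_add.
Qed.

(* The primes in (y, 2y] all divide 'C(2y, y) <= 2^(2y), and each exceeds y. *)
Lemma chebyshev_dyadic k : k * count prime (iota (2 ^ k).+1 (2 ^ k)) <= 2 ^ k.+1.
Proof.
set y := 2 ^ k; set s := filter prime (iota y.+1 y).
have prod_lb : y ^ size s <= \prod_(p <- s) p.
  apply: expn_size_leq_prod => p.
  by rewrite mem_filter mem_iota => /and3P [_ /ltnW].
have prod_ub : \prod_(p <- s) p <= 'C(2 * y, y).
  apply: dvdn_leq; first by rewrite bin_gt0 leq_pmull.
  apply: prod_primes_dvd; first by rewrite filter_uniq // iota_uniq.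
    by apply/allP => p; rewrite mem_filter => /andP [].
  move=> p; rewrite mem_filter mem_iota => /and3P [pp lo hi].
  by apply: prime_dvd_bin_mid => //; apply/andP; split; lia.
have : 2 ^ (k * size s) <= 2 ^ (2 * y).
  by rewrite expnM (leq_trans prod_lb) // (leq_trans prod_ub) // bin_leq_exp2.
by rewrite leq_exp2l // size_filter expnS.
Qed.

Lemma dyadic_block_sum k n : 0 < k ->
  k * (\sum_((2 ^ k).+1 <= p < (2 * 2 ^ k).+1 | prime p) n %/ p) <= 2 * n.
Proof.
move=> k_gt0.
have block_ub : \sum_((2 ^ k).+1 <= p < (2 * 2 ^ k).+1 | prime p) n %/ p <=
                count prime (iota (2 ^ k).+1 (2 ^ k)) * (n %/ 2 ^ k).
  apply: (@leq_trans (\sum_((2 ^ k).+1 <= p < (2 * 2 ^ k).+1 | prime p) n %/ 2 ^ k)).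
    rewrite big_nat_cond [X in _ <= X]big_nat_cond.
    apply: leq_sum => p /andP [/andP [lo _] _].
    by apply: leq_div2l; [rewrite expn_gt0 | exact: ltnW].
  rewrite -sum1_count big_distrl /= /index_iota.
  have -> : (2 * 2 ^ k).+1 - (2 ^ k).+1 = 2 ^ k by lia.
  by apply: eq_leq; apply: eq_bigr => *; rewrite mul1n.
apply: (leq_trans (leq_mul (leqnn k) block_ub)).
rewrite mulnA (leq_trans (leq_mul (chebyshev_dyadic k) (leqnn _))) //.
by rewrite expnS -mulnA leq_mul2l /= mulnC -leq_divRL ?expn_gt0.
Qed.

Lemma sum_harmonic_bound (b : nat -> nat) N J : (forall k, 0 < k -> k * b k <= N) ->
  \sum_(1 <= k < 2 ^ J) b k <= J * N.
Proof.
move=> hb; elim: J => [|J IH]; first by rewrite expn0 big_geq.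
rewrite (@big_cat_nat _ _ _ (2 ^ J)) //=; last 2 first.
- by rewrite expn_gt0.
- by rewrite leq_pexp2l.
rewrite mulSn addnC leq_add //.
apply: (@leq_trans (\sum_(2 ^ J <= k < 2 ^ J.+1) (N %/ 2 ^ J))).
  rewrite big_nat_cond [X in _ <= X]big_nat_cond.
  apply: leq_sum => k /andP [/andP [lo _] _].
  have k_gt0 : 0 < k by apply: leq_trans lo; rewrite expn_gt0.
  apply: (@leq_trans (N %/ k)); first by rewrite leq_divRL // mulnC hb.
  by apply: leq_div2l; rewrite ?expn_gt0.
rewrite sum_nat_const_nat expnS.
have -> : 2 * 2 ^ J - 2 ^ J = 2 ^ J by lia.
by rewrite mulnC -leq_divRL ?expn_gt0.
Qed.

Lemma big_primes_dyadic (f : nat -> nat) K :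
  \sum_(2 <= p < (2 ^ K).+1 | prime p) f p =
  \sum_(k < K) \sum_((2 ^ k).+1 <= p < (2 * 2 ^ k).+1 | prime p) f p.
Proof.
elim: K => [|K IH]; first by rewrite big_ord0 expn0 big_geq.
rewrite big_ord_recr /= -IH (@big_cat_nat _ _ _ (2 ^ K).+1) //=.
- by rewrite expnS.
- by rewrite ltnS expn_gt0.
- by rewrite ltnS expnS leq_pmull.
Qed.

Lemma leq_big_nat_widen (P : pred nat) (F : nat -> nat) a m p : a <= m -> m <= p ->
  \sum_(a <= i < m | P i) F i <= \sum_(a <= i < p | P i) F i.
Proof. by move=> am mp; rewrite (big_cat_nat am mp) /= leq_addr. Qed.

Lemma sum_div_primes_bound n R : 2 <= R ->
  \sum_(0 <= p < R | prime p) n %/ p <=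
  n + 2 * n * (trunc_log 2 (trunc_log 2 R) + 2).
Proof.
move=> R2; set t := trunc_log 2 R.
have t_gt0 : 0 < t by rewrite /t trunc_log_gt0.
have RK : R <= (2 ^ t.+1).+1 by apply: ltnW; rewrite ltnS ltnW // trunc_log_ltn.
apply: (leq_trans (leq_big_nat_widen _ _ (leq0n _) RK)).
rewrite (@big_cat_nat _ _ _ 2) //=; last by rewrite ltnS expn_gt0.
rewrite [X in X + _]big_mkcond big_nat_recl // big_nat_recl // big_geq //= add0n.
rewrite big_primes_dyadic big_ord_recl /= !add0n.
set J := (trunc_log 2 t.+1).+1.
have tJ : t.+1 <= 2 ^ J by apply: ltnW; rewrite trunc_log_ltn.
have J_ub : J <= trunc_log 2 t + 2.
  have : trunc_log 2 t.+1 <= trunc_log 2 t.*2 by apply: leq_trunc_log; lia.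
  by rewrite trunc_log2_double // /J; lia.
apply: leq_add; first by rewrite expn0 muln1 big_mkcond big_nat1 /= leq_div.
have -> : \sum_(i < t) \sum_((2 ^ bump 0 i).+1 <= p < (2 * 2 ^ bump 0 i).+1 | prime p) n %/ p
   = \sum_(1 <= k < t.+1) \sum_((2 ^ k).+1 <= p < (2 * 2 ^ k).+1 | prime p) n %/ p.
  by rewrite big_add1 /= big_mkord; apply: eq_bigr => i _; rewrite /bump.
apply: (leq_trans (leq_big_nat_widen _ _ (isT : 1 <= t.+1) tJ)).
apply: (leq_trans (sum_harmonic_bound (N := 2 * n) J (fun k k_gt0 => dyadic_block_sum n k_gt0))).
by rewrite mulnC leq_mul2l J_ub orbT.
Qed.

(** * One call of next() *)

Definition mult_gap (x m : nat) := (x - m %% x) %% x.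

Lemma mult_gap_lt x m : 0 < x -> mult_gap x m < x.
Proof. by move=> x_gt0; rewrite /mult_gap ltn_pmod. Qed.

Lemma mult_gap_eq0 x m : 0 < x -> (mult_gap x m == 0) = (x %| m).
Proof.
move=> x_gt0; rewrite /mult_gap /dvdn.
have := ltn_pmod m x_gt0; set a := m %% x => lt_ax.
case: (posnP a) => [->|a_gt0]; first by rewrite subn0 modnn eqxx.
by rewrite modn_small; [apply/eqP/eqP; lia | lia].
Qed.

Lemma mult_gapS x m : 1 < x ->
  mult_gap x m.+1 = if x %| m then x.-1 else (mult_gap x m).-1.
Proof.
move=> x_gt1; have x_gt0 : 0 < x by lia.
rewrite /mult_gap /dvdn -addn1 -modnDml addn1.
have := ltn_pmod m x_gt0; set a := m %% x => lt_ax.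
case: (posnP a) => [->|a_gt0]; first by rewrite (modn_small x_gt1) modn_small; lia.
rewrite (@modn_small (x - a)); last by lia.
case: (ltngtP a.+1 x) => h; first by rewrite (modn_small h) modn_small; lia.
- lia.
- by rewrite h modnn subn0 modnn; lia.
Qed.

Lemma modn_sub_small a d : d <= a < 2 * d -> a %% d = a - d.
Proof. by move=> /andP [h1 h2]; rewrite -{1}(subnK h1) modnDr modn_small //; lia. Qed.

Lemma addn_modn_neq pos p delta : pos < delta -> 0 < p < delta ->
  (pos + p) %% delta != pos.
Proof.
move=> lt_pos /andP [p_gt0 lt_p].
case: (ltnP (pos + p) delta) => h; first by rewrite modn_small //; lia.
by rewrite modn_sub_small; lia.
Qed.

Lemma slot_succ pos delta x m : pos < delta -> 1 < x < delta ->
  let pos' := (pos + 1) %% delta in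
  let delta' := if pos' == 0 then delta + 2 else delta in
  (pos' + mult_gap x m.+1) %% delta' =
  if x %| m then (pos + x) %% delta else (pos + mult_gap x m) %% delta.
Proof.
move=> lt_pos /andP [x_gt1 lt_x] /=.
have x_gt0 : 0 < x by lia.
have lt_gap := mult_gap_lt m x_gt0.
have gap0 := mult_gap_eq0 m x_gt0.
rewrite mult_gapS //.
case: (ltngtP (pos + 1) delta) => hp; [|lia|].
- rewrite (modn_small hp) addn1 /=.
  case: ifP => dvd_xm; first by congr (_ %% _); lia.
  have : mult_gap x m != 0 by rewrite gap0 dvd_xm.
  by move=> ?; congr (_ %% _); lia.
- rewrite hp modnn eqxx add0n.
  case: ifP => dvd_xm; first by rewrite modn_small ?modn_sub_small; lia.
  have : mult_gap x m != 0 by rewrite gap0 dvd_xm.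
  by move=> ?; rewrite modn_small ?modn_sub_small; lia.
Qed.

Lemma count_push x p j T i : count_mem x (nth [::] (push p j T) i) =
  (if i == j then (p == x) + count_mem x (nth [::] T i) else count_mem x (nth [::] T i)).
Proof. by rewrite /push nth_set_nth /=; case: eqP => // ->. Qed.

Lemma nth_push_neq p j T i : i != j -> nth [::] (push p j T) i = nth [::] T i.
Proof. by rewrite /push nth_set_nth /= => /negbTE ->. Qed.

Lemma nth_pop_stack T i pos : nth [::] (pop_stack pos T) i =
  if i == pos then behead (nth [::] T pos) else nth [::] T i.
Proof. by rewrite /pop_stack nth_set_nth /=; case: eqP => // ->. Qed.

Lemma size_push p j T : j < size T -> size (push p j T) = size T.
Proof. by move=> h; rewrite /push size_set_nth; apply/maxn_idPr. Qed.

Lemma size_pop_stack pos T : pos < size T -> size (pop_stack pos T) = size T.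
Proof. by move=> h; rewrite /pop_stack size_set_nth; apply/maxn_idPr. Qed.

(* No entry of [L] is [0] or a multiple of Δ, so no push lands back on
   T[pos]: the loop terminates and moves each [p] of [L] to T[pos + p]. *)
Lemma sieve_loop_spec pos delta L T : pos < size T -> size T = delta ->
  nth [::] T pos = L -> {in L, forall p, 0 < p < delta} ->
  exists T', [/\ sieve_loop pos delta L T = Some (T', 1 + 5 * size L),
    size T' = size T, nth [::] T' pos = [::] &
    forall i x, i != pos -> count_mem x (nth [::] T' i) =
      count_mem x (nth [::] T i) + count_mem x L * ((pos + x) %% delta == i)].
Proof.
elim: L T => [|p L IH] T lt_pos size_T T_pos L_range /=.
  by exists T; split => // i x _; rewrite mul0n addn0.
have p_range : 0 < p < delta by apply: L_range; rewrite mem_head.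
have j_neq := addn_modn_neq (_ : pos < delta) p_range.
rewrite (negbTE (j_neq _)); last by rewrite -size_T.
set j := (pos + p) %% delta.
have lt_j : j < size T by rewrite size_T /j ltn_mod; lia.
set T1 := push p j (pop_stack pos T).
have size_T1 : size T1 = size T by rewrite /T1 size_push size_pop_stack // size_pop_stack.
have T1_pos : nth [::] T1 pos = L.
  rewrite /T1 nth_push_neq; last by rewrite eq_sym j_neq // -size_T.
  by rewrite nth_pop_stack eqxx T_pos.
have [||||T' [-> size_T' T'_pos count_T']] := IH T1; rewrite ?size_T1 //.
  by move=> q qL; apply: L_range; rewrite in_cons qL orbT.
exists T'; split => //.
- by congr (Some (_, _)); rewrite /cost_iter /=; lia.
- by rewrite size_T' size_T1.
move=> i x neq_i; rewrite count_T' // /T1 count_push nth_pop_stack (negbTE neq_i) /=.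
case: (p =P x) => [<-|_]; last by case: ifP; rewrite /= add0n.
by case: (eqVneq i j) => [->|neq_ij]; rewrite /j;
  case: (eqVneq ((pos + p) %% delta) i) => [e|e] /=; rewrite ?muln1 ?muln0; lia.
Qed.

Lemma next_unfold T delta pos m r s T1 c1 :
  sieve_loop pos delta (nth [::] T pos) T = Some (T1, c1) ->
  let L := nth [::] T pos in
  let sq := m == s in
  let T2 := if sq && nilp L then push r ((pos + r) %% delta) T1 else T1 in
  let pos' := (pos + 1) %% delta in
  let wrap := pos' == 0 in
  Defs.next (RS T delta pos m r s) =
  Some (~~ sq && nilp L,
        RS (if wrap then T2 ++ [:: [::]; [::]] else T2)
           (if wrap then delta + 2 else delta) pos' m.+1
           (if sq then r.+1 else r) (if sq then r.+1 ^ 2 else s),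
        c1 + (if sq then 6 else 1) + (if wrap then 3 else 1) + cost_next).
Proof.
move=> h /=; rewrite /Defs.next /= h.
by case: (m == s); case: (nilp _); case: ((pos + 1) %% delta == 0).
Qed.

Lemma sq_not_prime r : 1 < r -> prime (r * r) = false.
Proof.
move=> r_gt1; apply/negP => pr.
have := Euclid_dvdM r r pr; rewrite dvdnn orbb => /esym /dvdn_leq.
by rewrite (_ : 0 < r) //; [move=> /(_ isT); nia | lia].
Qed.

Lemma small_pdiv_sq r : 1 < r ->
  (~~ has (fun x => prime x && (x %| r * r)) (iota 0 r)) = prime r.
Proof.
move=> r_gt1; apply/idP/idP.
  move=> /hasPn nodiv; apply/negPn/negP => npr.
  have lt_pdiv : pdiv r < r.
    rewrite ltn_neqAle pdiv_leq; last by lia.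
    by rewrite andbT; apply/eqP => e; rewrite -e pdiv_prime in npr.
  have := nodiv (pdiv r); rewrite mem_iota add0n lt_pdiv pdiv_prime //=.
  by rewrite dvdn_mulr ?pdiv_dvd // => /(_ isT).
move=> pr; apply/hasPn => x; rewrite mem_iota add0n /= => lt_xr.
apply/negP => /andP [px]; rewrite Euclid_dvdM // orbb dvdn_prime2 // => /eqP e.
lia.
Qed.

Lemma small_pdiv_prime r m : 2 < r -> r.-1 * r.-1 <= m < r * r ->
  (~~ has (fun x => prime x && (x %| m)) (iota 0 r)) = prime m.
Proof.
move=> r_gt2 /andP [lo hi]; apply/idP/idP.
  move=> /hasPn nodiv; apply: ltn_pdiv2_prime; first by nia.
  rewrite ltnNge; apply/negP => le_m.
  have m_gt1 : 1 < m by nia.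
  have lt_pdiv : pdiv m < r.
    rewrite ltnNge; apply/negP => le_r.
    have : r * r <= pdiv m ^ 2 by rewrite expnS expn1 leq_mul.
    lia.
  have := nodiv (pdiv m); rewrite mem_iota add0n lt_pdiv pdiv_prime //.
  by rewrite pdiv_dvd => /(_ isT).
move=> pm; apply/hasPn => x; rewrite mem_iota add0n /= => lt_xr.
apply/negP => /andP [px]; rewrite dvdn_prime2 // => /eqP e.
nia.
Qed.

(** * The sieve invariant *)

Definition slot (st : rs_state) x := (rs_pos st + mult_gap x (rs_m st)) %% rs_delta st.

(* Each prime [p < r] is stored exactly once, in the stack [mult_gap p m]
   places after [pos], i.e. the one reached when [m] hits its next multiple
   of [p].  Starting from [m = 100], Δ = 13, [j] counts the wrap-arounds. *)
Record sieve_inv (st : rs_state) : Prop := SieveInv {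
  size_table : size (rs_T st) = rs_delta st;
  delta_m_wraps : exists j,
    rs_delta st = 13 + 2 * j /\ rs_m st = 100 + j * j + 12 * j + rs_pos st;
  pos_lt_delta : rs_pos st < rs_delta st;
  s_sqr : rs_s st = rs_r st ^ 2;
  r_pred_sq_le_m : (rs_r st).-1 * (rs_r st).-1 <= rs_m st;
  m_le_r_sq : rs_m st <= rs_r st * rs_r st;
  r_ge11 : 11 <= rs_r st;
  count_table : forall i x, i < rs_delta st ->
    count_mem x (nth [::] (rs_T st) i) = prime x && (x < rs_r st) && (slot st x == i) }.

Lemma sieve_inv_r_delta st : sieve_inv st -> rs_r st + 2 <= rs_delta st.
Proof.
case=> _ [j [-> m_def]] lt_pos _ r_lb _ r11 _.
have : rs_r st - 1 < j + 11.
  rewrite ltnNge; apply/negP => le_j.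
  have : (j + 11) * (j + 11) <= (rs_r st).-1 * (rs_r st).-1 by apply: leq_mul; lia.
  nia.
lia.
Qed.

Lemma size_leq_count_iota (L : seq nat) (a : pred nat) r :
  (forall x, count_mem x L <= a x && (x < r)) -> size L <= count a (iota 0 r).
Proof.
move=> count_L.
have uniq_L : uniq L.
  apply: count_mem_uniq => x; rewrite -has_pred1 has_count; have := count_L x.
  by case: (a x && _); case: (count_mem x L) => [|[|k]].
rewrite -size_filter; apply: uniq_leq_size => // x.
rewrite -has_pred1 has_count mem_filter mem_iota add0n => hc.
by have := count_L x; case: (a x) => /=; case: (x < r) => //=; rewrite leqNgt hc.
Qed.

Section NextStep.

Variables (T : seq (seq nat)) (delta pos m r s : nat).
Hypothesis inv : sieve_inv (RS T delta pos m r s).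

Let size_T : size T = delta := size_table inv.
Let lt_pos : pos < delta := pos_lt_delta inv.
Let s_def : s = r ^ 2 := s_sqr inv.
Let r_lb : r.-1 * r.-1 <= m := r_pred_sq_le_m inv.
Let r_ub : m <= r * r := m_le_r_sq inv.
Let r11 : 11 <= r := r_ge11 inv.
Let r_delta : r + 2 <= delta := sieve_inv_r_delta inv.
Let count_T i x : i < delta -> count_mem x (nth [::] T i) =
  prime x && (x < r) && ((pos + mult_gap x m) %% delta == i) := @count_table _ inv i x.

Let L := nth [::] T pos.

Lemma slot_eq_pos x : prime x -> x < r ->
  ((pos + mult_gap x m) %% delta == pos) = (x %| m).
Proof.
move=> px lt_xr; have x_gt0 := prime_gt0 px.
rewrite -(mult_gap_eq0 m x_gt0).
case: (eqVneq (mult_gap x m) 0) => [->|gap_neq0].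
  by rewrite addn0 modn_small // eqxx.
by apply/negbTE/addn_modn_neq => //; have := mult_gap_lt m x_gt0; lia.
Qed.

Lemma count_stack_pos x : count_mem x L = (prime x && (x %| m)) && (x < r).
Proof.
rewrite /L count_T //.
case: (boolP (prime x)) => px //=; case: (ltnP x r) => lt_xr /=; rewrite ?andbF //.
by rewrite slot_eq_pos // andbT.
Qed.

Lemma stack_pos_range : {in L, forall p, 0 < p < delta}.
Proof.
move=> p; rewrite -has_pred1 has_count count_stack_pos lt0b.
by move=> /andP [/andP [pp _] lt_pr]; rewrite prime_gt0 //=; lia.
Qed.

Lemma nilp_stack_pos : nilp L = ~~ has (fun x => prime x && (x %| m)) (iota 0 r).
Proof.
apply/idP/idP.
  move/nilP => L0; apply/hasPn => x; rewrite mem_iota add0n => /andP [_ lt_xr].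
  by apply/negP => hx; have := count_stack_pos x; rewrite L0 /= hx lt_xr.
move=> /hasPn nodiv; apply/nilP; case E: L => [|y L'] //.
have := count_stack_pos y; rewrite E /= eqxx /= => count_y.
have /andP [py lt_yr] : (prime y && (y %| m)) && (y < r).
  by move: count_y; case: (_ && _).
by have := nodiv y; rewrite mem_iota add0n lt_yr py => /(_ isT).
Qed.

Lemma next_output_prime : ~~ (m == s) && nilp L = prime m.
Proof.
case: eqP => [->|neq_ms] /=; first by rewrite s_def expnS expn1 sq_not_prime //; lia.
rewrite nilp_stack_pos small_pdiv_prime //; first by lia.
by move: r_ub neq_ms; rewrite s_def expnS expn1; lia.
Qed.

Let next_slot x := if x %| m then (pos + x) %% delta else (pos + mult_gap x m) %% delta.

Lemma next_slot_neq_pos x : prime x -> x < r -> next_slot x != pos.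
Proof.
move=> px lt_xr; have x_gt0 := prime_gt0 px; rewrite /next_slot.
case: ifP => dvd_xm; first by apply: addn_modn_neq => //; lia.
have : mult_gap x m != 0 by rewrite mult_gap_eq0 // dvd_xm.
by have := mult_gap_lt m x_gt0; move=> *; apply: addn_modn_neq => //; lia.
Qed.

Variable T1 : seq (seq nat).
Hypotheses (size_T1 : size T1 = size T) (T1_pos : nth [::] T1 pos = [::])
  (count_T1 : forall i x, i != pos -> count_mem x (nth [::] T1 i) =
      count_mem x (nth [::] T i) + count_mem x L * ((pos + x) %% delta == i)).

Lemma count_after_loop i x : i < delta ->
  count_mem x (nth [::] T1 i) = prime x && (x < r) && (next_slot x == i).
Proof.
move=> lt_i; case: (eqVneq i pos) => [->|neq_i].
  rewrite T1_pos /=; case: (boolP (prime x)) => //= px.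
  by case: (ltnP x r) => //= lt_xr; rewrite (negbTE (next_slot_neq_pos px lt_xr)).
rewrite count_T1 // count_stack_pos count_T //.
case: (boolP (prime x)) => //= px; case: (ltnP x r) => //= lt_xr.
  rewrite !andbT /next_slot; case: ifP => dvd_xm /=; last by rewrite addn0.
  have -> : mult_gap x m = 0 by apply/eqP; rewrite mult_gap_eq0 // prime_gt0.
  by rewrite addn0 modn_small // eq_sym (negbTE neq_i) add0n mul1n.
by rewrite andbF mul0n.
Qed.

Let r' := if m == s then r.+1 else r.
Let T2 := if (m == s) && nilp L then push r ((pos + r) %% delta) T1 else T1.

Lemma size_T2 : size T2 = delta.
Proof.
rewrite /T2; case: ifP => _; last by rewrite size_T1.
by rewrite size_push size_T1 // size_T ltn_mod; lia.
Qed.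

(* At [m = r^2] the new bound r+1 adds [r] to the table iff [r] is prime,
   i.e. iff no smaller prime was popped. *)
Lemma count_after_square i x : i < delta ->
  count_mem x (nth [::] T2 i) = prime x && (x < r') && (next_slot x == i).
Proof.
move=> lt_i; rewrite /T2 /r'.
case: (eqVneq m s) => [ems|neq_ms] /=; last by rewrite count_after_loop.
have m_sq : m = r * r by rewrite ems s_def expnS expn1.
have nilp_prime : nilp L = prime r.
  by rewrite nilp_stack_pos m_sq small_pdiv_sq //; lia.
rewrite nilp_prime ltnS leq_eqVlt.
case: (eqVneq x r) => [->|neq_xr] /=; last first.
  rewrite -count_after_loop //; case: ifP => _ //.
  by rewrite count_push (eq_sym r x) (negbTE neq_xr) add0n if_same.
have slot_r : next_slot r = (pos + r) %% delta by rewrite /next_slot m_sq dvdn_mulr.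
case: (boolP (prime r)) => pr; last by rewrite count_after_loop // (negbTE pr).
rewrite count_push count_after_loop // ltnn andbF /= addn0 slot_r eq_sym.
by rewrite eqxx; case: (_ == _).
Qed.

Let pos' := (pos + 1) %% delta.
Let wrap := pos' == 0.

Lemma sieve_inv_next :
  sieve_inv (RS (if wrap then T2 ++ [:: [::]; [::]] else T2)
                (if wrap then delta + 2 else delta) pos' m.+1 r'
                (if m == s then r.+1 ^ 2 else s)).
Proof.
have [j [/= delta_def m_def]] := delta_m_wraps inv.
have lt_r' : r' <= r.+1 by rewrite /r'; case: (m == s).
have m_sq : m == s -> m = r * r by move/eqP => ->; rewrite s_def expnS expn1.
have m_lt : m != s -> m < r * r.
  move=> neq_ms; rewrite ltn_neqAle r_ub andbT; apply: contra neq_ms => /eqP ->.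
  by rewrite s_def expnS expn1.
have slot_new x : prime x -> x < r' ->
    (pos' + mult_gap x m.+1) %% (if wrap then delta + 2 else delta) = next_slot x.
  by move=> px lt_x; apply: slot_succ => //; rewrite prime_gt1 //=; lia.
have lt_next_slot x : next_slot x < delta.
  by rewrite /next_slot; case: (x %| m); rewrite ltn_mod; lia.
constructor => /=.
- by rewrite /wrap; case: ifP => _; rewrite ?size_cat size_T2.
- rewrite /wrap /pos'; case: (ltnP (pos + 1) delta) => h.
    by rewrite (modn_small h) addn1 /=; exists j; lia.
  by rewrite (_ : pos + 1 = delta) ?modnn ?eqxx; [exists j.+1; nia | lia].
- by rewrite /wrap /pos'; have := ltn_mod (pos + 1) delta; case: ifP => _; lia.
- by rewrite /r'; case: (m == s).
- by rewrite /r'; case: (boolP (m == s)) => [/m_sq ->|_] /=; lia.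
- by rewrite /r'; case: (boolP (m == s)) => [/m_sq ->|/m_lt] /=; nia.
- by rewrite /r'; case: (m == s); lia.
move=> i x lt_i; rewrite /slot /=.
have -> : nth [::] (if wrap then T2 ++ [:: [::]; [::]] else T2) i =
          if i < delta then nth [::] T2 i else [::].
  case: ifP lt_i => hw lt_i; last by rewrite lt_i.
  rewrite nth_cat size_T2; case: (ltnP i delta) => // _.
  by case: (i - delta) => [|[|k]] //=; rewrite nth_nil.
case: (ltnP i delta) => le_i.
  rewrite count_after_square //; case: (boolP (prime x)) => //= px.
  by case: (ltnP x r') => //= lt_x; rewrite slot_new.
case: (boolP (prime x)) => //= px; case: (ltnP x r') => //= lt_x.
by rewrite slot_new //; have := lt_next_slot x; case: eqP => //; lia.
Qed.

End NextStep.

Definition npdiv_below R m := count (fun p => prime p && (p %| m)) (iota 0 R).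

Lemma next_spec st : sieve_inv st -> exists st' c,
  [/\ Defs.next st = Some (prime (rs_m st), st', c), sieve_inv st',
      rs_m st' = (rs_m st).+1 & c <= 22 + 5 * npdiv_below (rs_r st) (rs_m st)].
Proof.
case: st => T delta pos m r s inv /=.
have lt_pos : pos < size T by rewrite (size_table inv) (pos_lt_delta inv).
have /= [T1 [loop size_T1 T1_pos count_T1]] :=
  sieve_loop_spec lt_pos (size_table inv) erefl (stack_pos_range inv).
rewrite (next_unfold m r s loop) (next_output_prime inv).
eexists; eexists; split; first reflexivity.
- by apply: (sieve_inv_next inv size_T1 T1_pos) => i x; apply: count_T1.
- by [].
have : size (nth [::] T pos) <= npdiv_below r m.
  by apply: size_leq_count_iota => x; rewrite (count_stack_pos inv).
by rewrite /cost_next; case: (m == s); case: (_ == 0); lia.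
Qed.

Definition table100 : seq (seq nat) :=
  [:: [:: 5; 2]; [::]; [:: 3]; [::]; [::]; [:: 7]; [::]; [::]; [::];
      [::]; [::]; [::]; [::]].

Lemma rs_init100E : rs_init 100 = RS table100 13 0 100 11 121.
Proof. by vm_compute. Qed.

Lemma sieve_inv_init : sieve_inv (rs_init 100).
Proof.
rewrite rs_init100E; constructor => //=; first by exists 0.
move=> i x lt_i; case: (ltnP x 11) => lt_x.
  have table_ok : all (fun i => all (fun x => count_mem x (nth [::] table100 i) ==
      (prime x && (x < 11) && ((0 + mult_gap x 100) %% 13 == i))) (iota 0 11)) (iota 0 13).
    by vm_compute.
  move/allP: table_ok => /(_ i); rewrite mem_iota add0n lt_i => /(_ isT) /allP /(_ x).
  by rewrite mem_iota add0n lt_x => /(_ isT) /eqP.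
rewrite andbF /=; apply/count_memPn.
case: (ltnP i (size table100)) => lt_size; last by rewrite nth_default.
have /allP := allP (isT : all (all (fun y => y < 11)) table100) _ (mem_nth [::] lt_size).
by move=> small; apply/negP => /small; lia.
Qed.

Lemma sqrt_bounds n : Nat.sqrt n * Nat.sqrt n <= n < (Nat.sqrt n).+1 * (Nat.sqrt n).+1.
Proof.
have [lo hi] := Nat.sqrt_spec n (Nat.le_0_l _).
by apply/andP; split; [apply/leP | apply/ltP].
Qed.

Lemma leq_sqrt a n : a * a <= n -> a <= Nat.sqrt n.
Proof.
move=> le_sq; have /andP [_ hi] := sqrt_bounds n.
rewrite leqNgt; apply/negP => lt_sqrt.
have : (Nat.sqrt n).+1 * (Nat.sqrt n).+1 <= a * a by apply: leq_mul.
lia.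
Qed.

Lemma sieve_inv_entries st : sieve_inv st -> sumn (map size (rs_T st)) <= rs_r st.
Proof.
move=> inv; rewrite -size_flatten.
apply: (leq_trans (size_leq_count_iota (a := prime) (r := rs_r st) _)); last first.
  by rewrite -{2}(size_iota 0 (rs_r st)) count_size.
move=> x; rewrite count_flatten -(mkseq_nth [::] (rs_T st)) /mkseq -map_comp.
rewrite (size_table inv).
have -> : [seq (count (pred1 x) \o nth [::] (rs_T st)) i | i <- iota 0 (rs_delta st)] =
          [seq ((prime x && (x < rs_r st)) && (slot st x == i) : nat)
          | i <- iota 0 (rs_delta st)].
  by apply/eq_in_map => i; rewrite mem_iota add0n /= => lt_i; rewrite (count_table inv).
rewrite sumn_count; case: (prime x && (x < rs_r st)) => /=; last by rewrite count_pred0.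
rewrite (@eq_count _ _ (pred1 (slot st x))); last by move=> i /=; rewrite eq_sym.
by rewrite count_uniq_mem ?iota_uniq //; case: (_ \in _).
Qed.

Definition space_bound n := word_bits n * (4 * Nat.sqrt n + 27).

(* Δ = 13 + 2j with j^2 <= m, and the table holds fewer than r <= √n + 2 primes. *)
Lemma rs_space_le st n : sieve_inv st -> rs_m st <= n.+1 -> rs_space n st <= space_bound n.
Proof.
move=> inv le_m; rewrite /rs_space /space_bound leq_mul2l; apply/orP; right.
have entries := sieve_inv_entries inv.
have /andP [lo hi] := sqrt_bounds n.
set q := Nat.sqrt n in lo hi *.
have [j [delta_def m_def]] := delta_m_wraps inv.
have le_jq : j <= q by apply: leq_sqrt; lia.
have r_lb := r_pred_sq_le_m inv.
have le_r : (rs_r st).-1 <= q.+1.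
  rewrite leqNgt; apply/negP => lt_r.
  have : q.+2 * q.+2 <= (rs_r st).-1 * (rs_r st).-1 by apply: leq_mul.
  nia.
lia.
Qed.

Lemma count_iota_mono a r R : r <= R -> count a (iota 0 r) <= count a (iota 0 R).
Proof. by move=> le_rR; rewrite -(subnKC le_rR) iotaD count_cat leq_addr. Qed.

Lemma rs_iter_spec n k : forall st out ops sp, sieve_inv st -> rs_m st + k <= n.+1 ->
  exists out' ops' sp', [/\ rs_iter n k st out ops sp = Some (out', ops', sp'),
   out' = out ++ [seq m <- iota (rs_m st) k | prime m],
   ops' <= ops + \sum_(m <- iota (rs_m st) k) (22 + 5 * npdiv_below (Nat.sqrt n).+1 m) &
   sp' <= maxn sp (space_bound n)].
Proof.
elim: k => [|k IH] st out ops sp inv le_k /=.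
  by exists out, ops, sp; split; rewrite ?cats0 ?big_nil ?addn0 ?leq_maxl.
have [st' [c [-> inv' m' le_c]]] := next_spec inv.
have le_k' : rs_m st' + k <= n.+1 by rewrite m'; lia.
have [out' [ops' [sp' [-> out_def le_ops le_sp]]]] :=
  IH st' (if prime (rs_m st) then rcons out (rs_m st) else out)
     (ops + c) (maxn sp (rs_space n st')) inv' le_k'.
exists out', ops', sp'; split => //.
- by rewrite out_def m'; case: (prime (rs_m st)); rewrite //= cat_rcons.
- apply: (leq_trans le_ops); rewrite m' big_cons addnA leq_add2r leq_add2l.
  apply: (leq_trans le_c); rewrite leq_add2l leq_mul2l /=.
  have le_m : rs_m st <= n by lia.
  by apply: count_iota_mono; have := leq_sqrt (leq_trans (r_pred_sq_le_m inv) le_m); lia.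
- apply: (leq_trans le_sp); rewrite geq_max leq_maxr andbT geq_max leq_maxl /=.
  by rewrite (leq_trans (rs_space_le inv' _)) ?leq_maxr // m'; lia.
Qed.

(** * Complexity of the whole run *)

Lemma sum_dvdn_nat p N : 0 < p -> \sum_(1 <= m < N.+1) (p %| m : nat) = N %/ p.
Proof.
move=> p_gt0; elim: N => [|N IH]; first by rewrite big_geq // div0n.
by rewrite big_nat_recr //= IH divnS // addnC.
Qed.

Lemma npdiv_belowE R m : npdiv_below R m = \sum_(0 <= p < R | prime p) (p %| m : nat).
Proof.
rewrite /npdiv_below -sum1_count big_mkcondr /= /index_iota subn0.
by apply: eq_bigr => p _; case: (p %| m).
Qed.

Lemma sum_npdiv_below R a k : 0 < a ->
  \sum_(m <- iota a k) npdiv_below R m <= \sum_(0 <= p < R | prime p) (a + k).-1 %/ p.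
Proof.
move=> a_gt0; rewrite (_ : iota a k = index_iota a (a + k)); last by rewrite /index_iota addKn.
under eq_bigr => m _ do rewrite npdiv_belowE.
rewrite exchange_big_nat /= big_nat_cond [X in _ <= X]big_nat_cond.
apply: leq_sum => p /andP [_ pp]; rewrite -sum_dvdn_nat ?prime_gt0 //.
case: k => [|k]; first by rewrite big_geq ?addn0.
rewrite (_ : (a + k.+1).-1.+1 = a + k.+1); last by lia.
by rewrite [X in _ <= X](@big_cat_nat _ _ _ a) //= ?leq_addl; lia.
Qed.

Lemma sum_next_costs n : 100 <= n ->
  \sum_(m <- iota 100 (n - 99)) (22 + 5 * npdiv_below (Nat.sqrt n).+1 m) <=
  47 * n + 10 * n * trunc_log 2 (trunc_log 2 n).
Proof.
move=> n_ge100; have /andP [lo hi] := sqrt_bounds n.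
set q := Nat.sqrt n in lo hi *.
have q_ge10 : 10 <= q by apply: leq_sqrt; lia.
rewrite big_split /= big_const_seq count_predT size_iota iter_addn_0 -big_distrr /=.
have divisors := sum_npdiv_below q.+1 (n - 99) (isT : 0 < 100).
rewrite (_ : (100 + (n - 99)).-1 = n) in divisors; last by lia.
have primes := sum_div_primes_bound n (_ : 2 <= q.+1); rewrite ltnS in primes.
have le_loglog : trunc_log 2 (trunc_log 2 q.+1) <= trunc_log 2 (trunc_log 2 n).
  by apply/leq_trunc_log/leq_trunc_log; nia.
have := leq_trans divisors (primes (leq_trans (isT : 1 <= 10) q_ge10)); nia.
Qed.

Lemma rolling_sieve_nat_bounds n : 100 <= n ->
  exists out ops sp, [/\ rolling_sieve n = Some (out, ops, sp),
    out = [seq p <- iota 0 n.+1 | prime p],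
    ops <= 1073 + 47 * n + 10 * n * trunc_log 2 (trunc_log 2 n) &
    sp <= (trunc_log 2 n + 2) * (4 * Nat.sqrt n + 27)].
Proof.
move=> n_ge100; rewrite /rolling_sieve ltnNge n_ge100 /=.
have m_init : rs_m (rs_init 100) = 100 by rewrite rs_init100E.
have le_k : rs_m (rs_init 100) + (n - 99) <= n.+1 by rewrite m_init; lia.
have [out [ops [sp [-> out_def le_ops le_sp]]]] :=
  rs_iter_spec [seq p <- iota 0 (minn n 100).+1 | prime p] init_cost
    (rs_space n (rs_init 100)) sieve_inv_init le_k.
exists out, ops, sp; split => //.
- rewrite out_def m_init (_ : minn n 100 = 100); last by apply/minn_idPr.
  have -> : [seq p <- iota 0 101 | prime p] = [seq p <- iota 1 99 | prime p] by vm_compute.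
  by rewrite -filter_cat -iotaD; congr (filter _ (iota _ _)); lia.
- apply: (leq_trans le_ops); rewrite m_init (_ : init_cost = 1073); last by vm_compute.
  by rewrite -addnA leq_add2l sum_next_costs.
- apply: (leq_trans le_sp); rewrite geq_max /space_bound leqnn andbT.
  rewrite rs_init100E /rs_space /word_bits leq_mul2l /=; apply/orP; right.
  have : 1 <= Nat.sqrt n by apply: leq_sqrt; lia.
  lia.
Qed.

Section RealBounds.
Local Open Scope R_scope.

Lemma INR_leq a b : (a <= b)%N -> INR a <= INR b.
Proof. by move=> le_ab; apply/le_INR/leP. Qed.

Lemma ln_le_ln x y : 0 < x -> x <= y -> ln x <= ln y.
Proof. by move=> x_gt0 [lt_xy|->]; [apply/Rlt_le/ln_increasing | apply: Rle_refl]. Qed.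

Lemma trunc_log2_le_ln a : (0 < a)%N -> INR (trunc_log 2 a) * ln 2 <= ln (INR a).
Proof.
move=> a_gt0; rewrite -ln_pow; last by lra.
apply: ln_le_ln; first by apply: pow_lt; lra.
have := INR_leq (trunc_logP (isT : (1 < 2)%N) a_gt0).
rewrite (_ : (2 ^ trunc_log 2 a)%N = Nat.pow 2 (trunc_log 2 a)) ?pow_INR //.
by elim: (trunc_log 2 a) => // k IH; rewrite expnS IH.
Qed.

Lemma INR_sqrt_le n : INR (Nat.sqrt n) <= sqrt (INR n).
Proof.
have /andP [lo _] := sqrt_bounds n.
rewrite -(sqrt_square (INR (Nat.sqrt n))); last exact: pos_INR.
by apply: sqrt_le_1_alt; rewrite -mult_INR; apply: INR_leq.
Qed.

Lemma trunc_log2_le_2ln n : (0 < n)%N -> INR (trunc_log 2 n) <= 2 * ln (INR n).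
Proof.
move=> n_gt0; have := pos_INR (trunc_log 2 n).
by have := trunc_log2_le_ln n_gt0; have := ln_lt_2; nra.
Qed.

Lemma ln_ge8 n : (2 ^ 16 <= n)%N -> 8 <= ln (INR n).
Proof.
move=> n_large; have n_gt0 : (0 < n)%N by apply: leq_trans n_large.
have := INR_leq (trunc_log_max (isT : (1 < 2)%N) n_large).
rewrite INR_IZR_INZ /= => t_ge16.
by have := trunc_log2_le_ln n_gt0; have := ln_lt_2; nra.
Qed.

Lemma ops_real_bound n : (2 ^ 16 <= n)%N ->
  INR (1073 + 47 * n + 10 * n * trunc_log 2 (trunc_log 2 n)) <=
  100 * INR n * ln (ln (INR n)).
Proof.
move=> n_large; have n_gt0 : (0 < n)%N by apply: leq_trans n_large.
set t := trunc_log 2 n; set u := trunc_log 2 t.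
have t_gt0 : (0 < t)%N by apply: leq_trans (trunc_log_max (isT : (1 < 2)%N) n_large).
have ln_n := ln_ge8 n_large.
have n_ge : 65536 <= INR n by have := INR_leq n_large; rewrite INR_IZR_INZ.
have lnln_ge1 : 1 <= ln (ln (INR n)).
  rewrite -(ln_exp 1); apply: ln_le_ln; first exact: exp_pos.
  by have := exp_le_3; lra.
have ln_t : ln (INR t) <= ln 2 + ln (ln (INR n)).
  rewrite -ln_mult; try lra.
  apply: ln_le_ln; first exact: lt_0_INR (ltP t_gt0).
  exact: trunc_log2_le_2ln n_gt0.
have u_le : INR u <= 1 + 2 * ln (ln (INR n)).
  have u_ln := trunc_log2_le_ln t_gt0; rewrite -/u in u_ln.
  have := ln_lt_2; have := pos_INR u; nra.
rewrite plus_INR plus_INR (mult_INR 47 n) (mult_INR (10 * n) u) (mult_INR 10 n).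
rewrite (INR_IZR_INZ 1073) (INR_IZR_INZ 47) (INR_IZR_INZ 10) /=.
set LL := ln (ln (INR n)) in lnln_ge1 u_le *.
have : INR n * INR u <= INR n * (1 + 2 * LL) by apply: Rmult_le_compat_l; lra.
have : INR n <= INR n * LL by rewrite -{1}(Rmult_1_r (INR n)); apply: Rmult_le_compat_l; lra.
nra.
Qed.

Lemma space_real_bound n : (2 ^ 16 <= n)%N ->
  INR ((trunc_log 2 n + 2) * (4 * Nat.sqrt n + 27)) <= 100 * sqrt (INR n) * ln (INR n).
Proof.
move=> n_large; have n_gt0 : (0 < n)%N by apply: leq_trans n_large.
have ln_n := ln_ge8 n_large.
have t_le := trunc_log2_le_2ln n_gt0.
have s_le := INR_sqrt_le n.
have s_ge1 : 1 <= INR (Nat.sqrt n) by apply: (INR_leq (a := 1)); apply: leq_sqrt; lia.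
rewrite (mult_INR (trunc_log 2 n + 2)) (plus_INR (trunc_log 2 n) 2) (plus_INR (4 * Nat.sqrt n) 27).
rewrite (mult_INR 4) (INR_IZR_INZ 2) (INR_IZR_INZ 4) (INR_IZR_INZ 27) /=.
have t_ub : INR (trunc_log 2 n) + 2 <= 3 * ln (INR n) by lra.
have s_ub : 4 * INR (Nat.sqrt n) + 27 <= 31 * sqrt (INR n) by lra.
have t_ge0 := pos_INR (trunc_log 2 n).
have := Rmult_le_compat _ _ _ _ (ltac:(lra) : 0 <= INR (trunc_log 2 n) + 2)
  (ltac:(lra) : 0 <= 4 * INR (Nat.sqrt n) + 27) t_ub s_ub.
nra.
Qed.

End RealBounds.

Theorem theorem2 :
  exists (C : R) (N0 : nat), forall n : nat, (N0 <= n)%N ->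
    exists (out : seq nat) (ops sp : nat),
      rolling_sieve n = Some (out, ops, sp) /\
      out = [seq p <- iota 0 n.+1 | prime p] /\
      Rle (INR ops) (Rmult (Rmult C (INR n)) (ln (ln (INR n)))) /\
      Rle (INR sp) (Rmult (Rmult C (sqrt (INR n))) (ln (INR n))).
Proof.
exists (100 : R), (2 ^ 16) => n n_large.
have [out [ops [sp [run out_def ops_le sp_le]]]] :=
  rolling_sieve_nat_bounds (leq_trans (isT : (100 <= 2 ^ 16)%N) n_large).
exists out, ops, sp; do !split => //.
- exact: Rle_trans (INR_leq ops_le) (ops_real_bound n_large).
- exact: Rle_trans (INR_leq sp_le) (space_real_bound n_large).
Qed.
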